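(* Consider a seller with one item and a single ex-post rational buyer. The item's quality $q\in Q=[q_1,q_2]$ is drawn from a distribution with CDF $G$ and density $g$, observed only by the seller; the buyer's valuation is $v(q)$ with $v:Q\to\mathbb{R}^+$ monotone increasing with inverse $v^{-1}$. A fixed-price signaling mechanism is a pair $(\pi,p)$ where $\pi:Q\to[0,1]$ gives the probability of sending signal $1$ (''buy'') when the quality is $q$ (signal $0$, ''not buy'', is sent with probability $1-\pi(q)$), and $p$ is a fixed price. The mechanism is obedient for the ex-post rational buyer if $\int_{q_1}^{v^{-1}(p)}\pi(q)g(q)\,\mathrm{d}q=0$ and $\int_{v^{-1}(p)}^{q_2}[1-\pi(q)]g(q)\,\mathrm{d}q=0$. The seller's revenue is $Rev_{sig}(\pi,p)=p\int_Q\pi(q)g(q)\,\mathrm{d}q$. Then the mechanism $(\pi^*,p^* )$ with $p^*\in\arg\max_p[1-G(v^{-1}(p))]\cdot p$ and $\pi^*(q)=0$ if $q<v^{-1}(p^* )$, $\pi^*(q)=1$ otherwise, is an optimal (revenue-maximizing) obedient fixed-price signaling mechanism.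
   Context: An ex-post rational buyer buys if and only if his valuation $v(q)$ at the realized quality is at least $p$; obedience means that after signal 1 the buyer is (almost surely) willing to buy and after signal 0 he is (almost surely) not willing to buy, which the paper expresses by the two integral conditions above. Optimality is over all obedient pairs $(\pi,p)$. *)

From HB Require Import structures.
From mathcomp Require Import all_boot all_order all_algebra.
From mathcomp Require Import all_classical all_reals all_analysis.
Set Implicit Arguments. Unset Strict Implicit. Unset Printing Implicit Defensive.
Import Order.TTheory GRing.Theory Num.Theory.
Local Open Scope classical_set_scope.
Local Open Scope ring_scope.

Section Mech.
Variable R : realType.
Notation mu := (@lebesgue_measure R).

Definition Qset (q1 q2 : R) : set R := `[q1, q2]%classic.

(* qualities at which the ex-post rational buyer is NOT willing to buy at price p,
   i.e. {q in Q | v q < p} = {q in Q | q < v^{-1}(p)} *)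
Definition below_set (v : R -> R) (q1 q2 p : R) : set R :=
  Qset q1 q2 `&` [set q | v q < p].

Definition above_set (v : R -> R) (q1 q2 p : R) : set R :=
  Qset q1 q2 `&` [set q | p <= v q].

Definition obedient (g v : R -> R) (q1 q2 : R) (pi : R -> R) (p : R) : Prop :=
  (\int[mu]_(q in below_set v q1 q2 p) (pi q * g q)%:E = 0)%E /\
  (\int[mu]_(q in above_set v q1 q2 p) ((1 - pi q) * g q)%:E = 0)%E.

Definition rev_sig (g : R -> R) (q1 q2 : R) (pi : R -> R) (p : R) : \bar R :=
  (p%:E * \int[mu]_(q in Qset q1 q2) (pi q * g q)%:E)%E.

(* 1 - G(v^{-1}(p)) : probability that the quality is at least v^{-1}(p) *)
Definition sale_prob (g v : R -> R) (q1 q2 p : R) : \bar R :=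
  (\int[mu]_(q in above_set v q1 q2 p) (g q)%:E)%E.

Definition pi_star (v : R -> R) (pstar : R) : R -> R :=
  fun q => if v q < pstar then 0 else 1.

End Mech.

(** Obedience pins a mechanism down almost everywhere with respect to the
    density: [pi g] vanishes where [v q < p], and [(1 - pi) g] vanishes where
    [p <= v q].  Hence every obedient [(pi, p)] sells with probability
    [1 - G(v^{-1}(p))] and earns [p (1 - G(v^{-1}(p)))], so the revenue of an
    obedient mechanism depends only on its price.  The threshold mechanism
    [pi_star] is obedient at every price, and at [pstar] it attains the maximum
    of that function. *)
From HB Require Import structures.
From mathcomp Require Import all_boot all_order all_algebra.
From mathcomp Require Import all_classical all_reals all_analysis.
From mathcomp Require Import measurable_realfun.
Set Implicit Arguments. Unset Strict Implicit. Unset Printing Implicit Defensive.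
Import Order.TTheory GRing.Theory Num.Theory.
Local Open Scope classical_set_scope.
Local Open Scope ring_scope.

Notation mu := (@lebesgue_measure _).

Section ObedientRevenue.
Variables (R : realType) (q1 q2 : R) (g v : R -> R).

Lemma Qset_between {x y z : R} :
  Qset q1 q2 x -> Qset q1 q2 y -> x <= z <= y -> Qset q1 q2 z.
Proof.
rewrite /Qset /= !in_itv /= => /andP[q1x _] /andP[_ yq2] /andP[xz zy].
by rewrite (le_trans q1x xz) (le_trans zy yq2).
Qed.

Lemma Qset_below_above (p : R) :
  Qset q1 q2 = below_set v q1 q2 p `|` above_set v q1 q2 p.
Proof.
rewrite /below_set /above_set -setIUr.
suff -> : [set q | v q < p] `|` [set q | p <= v q] = setT by rewrite setIT.
by apply/seteqP; split=> q //= _; case: (ltP (v q) p); [left|right].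
Qed.

Lemma below_above_disjoint (p : R) :
  [disjoint below_set v q1 q2 p & above_set v q1 q2 p].
Proof.
apply/disj_setPS => q [[_ vq_lt] [_ p_le]].
by move: (lt_le_trans vq_lt p_le); rewrite ltxx.
Qed.

Lemma obedient_pi_star (p : R) : obedient g v q1 q2 (pi_star v p) p.
Proof.
rewrite /obedient /pi_star.
split; apply: integral0_eq => q [_ /= vq].
- by rewrite vq mul0r.
- by rewrite ltNge vq subrr mul0r.
Qed.

Lemma pi_star_ge0_le1 (p q : R) : 0 <= pi_star v p q <= 1.
Proof. by rewrite /pi_star; case: ifP; rewrite ?lexx ?ler01. Qed.

Hypothesis v_nondecr : {in Qset q1 q2 &, {homo v : x y / x <= y}}.

Lemma measurable_below_set (p : R) : measurable (below_set v q1 q2 p).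
Proof.
apply: is_interval_measurable => x y [Qx _] [Qy vy] z xzy.
have Qz := Qset_between Qx Qy xzy.
split=> //; apply: le_lt_trans vy; apply: v_nondecr; rewrite ?inE //.
by case/andP: xzy.
Qed.

Lemma measurable_above_set (p : R) : measurable (above_set v q1 q2 p).
Proof.
apply: is_interval_measurable => x y [Qx vx] [Qy _] z xzy.
have Qz := Qset_between Qx Qy xzy.
split=> //; apply: (le_trans vx); apply: v_nondecr; rewrite ?inE //.
by case/andP: xzy.
Qed.

Lemma measurable_pi_star (p : R) : measurable_fun (Qset q1 q2) (pi_star v p).
Proof.
apply: (eq_measurable_fun (\1_(above_set v q1 q2 p) : R -> R)).
  move=> q /[!inE] Qq; rewrite /pi_star indicE.
  case: ltP => [vq_lt|p_le]; last by rewrite mem_set.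
  by rewrite memNset // => -[_ /=]; rewrite leNgt vq_lt.
by apply: measurable_indic; exact: measurable_above_set.
Qed.

Hypothesis g_meas : measurable_fun (Qset q1 q2) g.
Hypothesis g_ge0 : forall q, Qset q1 q2 q -> 0 <= g q.

Lemma obedient_integral (pi : R -> R) (p : R) :
  measurable_fun (Qset q1 q2) pi ->
  (forall q, Qset q1 q2 q -> 0 <= pi q <= 1) ->
  obedient g v q1 q2 pi p ->
  (\int[mu]_(q in Qset q1 q2) (pi q * g q)%:E = sale_prob g v q1 q2 p)%E.
Proof.
move=> pi_meas pi01 [below0 above0].
have [mB mA] := (measurable_below_set p, measurable_above_set p).
have above_sub : above_set v q1 q2 p `<=` Qset q1 q2 by move=> q [].
have pig_ge0 q : Qset q1 q2 q -> (0 <= (pi q * g q)%:E)%E.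
  by move=> Qq; case/andP: (pi01 q Qq) => pi_ge0 _; rewrite lee_fin mulr_ge0 ?g_ge0.
have cpig_ge0 q : Qset q1 q2 q -> (0 <= ((1 - pi q) * g q)%:E)%E.
  by move=> Qq; case/andP: (pi01 q Qq) => _ pi_le1; rewrite lee_fin mulr_ge0 ?g_ge0 ?subr_ge0.
have pig_meas : measurable_fun (Qset q1 q2) (fun q => (pi q * g q)%:E).
  exact/measurable_EFinP/measurable_funM.
have cpig_meas : measurable_fun (Qset q1 q2) (fun q => ((1 - pi q) * g q)%:E).
  by apply/measurable_EFinP/measurable_funM => //; exact: measurable_funB.
have Q_split := Qset_below_above p.
have below_above_disj := below_above_disjoint p.
rewrite Q_split ge0_integral_setU -?Q_split //.
rewrite below0 add0e -[X in (X = _)%E]adde0 -above0.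
rewrite -ge0_integralD //.
- by apply: eq_integral => q _; rewrite -EFinD -mulrDl addrCA subrr addr0 mul1r.
- by move=> q [Qq _]; exact: pig_ge0.
- exact: measurable_funS (measurable_itv _) above_sub pig_meas.
- by move=> q [Qq _]; exact: cpig_ge0.
- exact: measurable_funS (measurable_itv _) above_sub cpig_meas.
Qed.

Lemma rev_sig_obedient (pi : R -> R) (p : R) :
  measurable_fun (Qset q1 q2) pi ->
  (forall q, Qset q1 q2 q -> 0 <= pi q <= 1) ->
  obedient g v q1 q2 pi p ->
  rev_sig g q1 q2 pi p = (sale_prob g v q1 q2 p * p%:E)%E.
Proof.
by move=> pi_meas pi01 pi_ob; rewrite /rev_sig (obedient_integral pi_meas pi01 pi_ob) muleC.
Qed.

End ObedientRevenue.

Theorem mainTheorem3 (R : realType) (q1 q2 : R) (g v : R -> R) (pstar : R) :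
  q1 < q2 ->
  (* g is a probability density on Q = [q1, q2] *)
  measurable_fun (Qset q1 q2) g ->
  (forall q, Qset q1 q2 q -> 0 <= g q) ->
  (\int[@lebesgue_measure R]_(q in Qset q1 q2) (g q)%:E = 1)%E ->
  (* v : Q -> R^+ is (strictly) increasing, hence invertible *)
  (forall q, Qset q1 q2 q -> 0 <= v q) ->
  {in Qset q1 q2 &, {mono v : x y / x < y}} ->
  (* pstar maximizes [1 - G(v^{-1}(p))] * p *)
  (forall p : R, (sale_prob g v q1 q2 p * p%:E <=
                  sale_prob g v q1 q2 pstar * pstar%:E)%E) ->
  (* (pi_star, pstar) is obedient, and optimal among obedient mechanisms *)
  obedient g v q1 q2 (pi_star v pstar) pstar /\
  forall (pi : R -> R) (p : R),
    measurable_fun (Qset q1 q2) pi ->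
    (forall q, Qset q1 q2 q -> 0 <= pi q <= 1) ->
    obedient g v q1 q2 pi p ->
    (rev_sig g q1 q2 pi p <= rev_sig g q1 q2 (pi_star v pstar) pstar)%E.
Proof.
move=> _ g_meas g_ge0 _ _ v_incr pstar_opt.
have v_nondecr : {in Qset q1 q2 &, {homo v : x y / x <= y}}.
  exact/monoW_in/le_mono_in/monoW_in.
have pi_star_obedient : obedient g v q1 q2 (pi_star v pstar) pstar.
  exact: obedient_pi_star.
split=> // pi p pi_meas pi01 pi_obedient.
have pi_star_meas := measurable_pi_star v_nondecr pstar.
have pi_star01 q : Qset q1 q2 q -> 0 <= pi_star v pstar q <= 1.
  by move=> _; exact: pi_star_ge0_le1.
rewrite (rev_sig_obedient v_nondecr g_meas g_ge0 pi_meas pi01 pi_obedient).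
rewrite (rev_sig_obedient v_nondecr g_meas g_ge0 pi_star_meas pi_star01
  pi_star_obedient).
exact: pstar_opt.
Qed.
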